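(* Let $Y,Z$ be finite-dimensional real or complex vector spaces, let $F\colon Y\to Z$ be a $C^2$ map, let $\mathcal A\subset L(Y,Y)$, let $\alpha\colon Z\to\mathcal A$, and let $f(y)=\alpha(F(y))y$. (a) If there exists $\beta\colon\mathcal A\to L(Z,Z)$ such that $F'(y)Ty=\beta(T)F(y)$ for all $y\in Y$ and $T\in\mathcal A$, then $f$ is $F$-related to $g(z)=\beta(\alpha(z))z$, i.e. $F'(y)f(y)=g(F(y))$ for all $y\in Y$. (b) If, in addition to the hypothesis of (a), $\mathcal A$ is a Jordan operator algebra on $Y$, then $F''(y)(f(y),f(y))=\gamma(F(y))$ for all $y\in Y$, where \[ \gamma(z)=\bigl[\beta(\alpha(z))^2-\beta(\alpha(z)^2)\bigr]z. \]
   Context: A Jordan operator algebra on $Y$ is a linear subspace of $L(Y,Y)$ closed under the Jordan product $S\bullet T:=\tfrac12(ST+TS)$. $L(Y,Y)$ denotes the linear maps $Y\to Y$. *)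

From HB Require Import structures.
From mathcomp Require Import all_boot all_order all_algebra.
From mathcomp Require Import all_classical all_reals all_analysis.
Set Implicit Arguments. Unset Strict Implicit. Unset Printing Implicit Defensive.
Import Order.TTheory GRing.Theory Num.Theory.
Import numFieldNormedType.Exports.
Local Open Scope classical_set_scope.
Local Open Scope ring_scope.

(* Y = 'rV[K]_n, Z = 'rV[K]_m; a linear map T in L(Y,Y) is a matrix
   T : 'M[K]_n acting by y |-> y *m T.  Under this convention the
   composition S o T corresponds to the matrix product T *m S. *)

Definition d2 (K : numFieldType) (n m : nat) (F : 'rV[K]_n -> 'rV[K]_m)
  (y u v : 'rV[K]_n) : 'rV[K]_m :=
  'd (fun x => 'd F x u) y v.

Definition C2 (K : numFieldType) (n m : nat) (F : 'rV[K]_n -> 'rV[K]_m) : Prop :=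
  (forall y, differentiable F y) /\
  (forall u y, differentiable (fun x => 'd F x u) y) /\
  (forall u v, continuous (fun y => d2 F y u v)).

Definition jordan_operator_algebra (K : numFieldType) (n : nat)
  (A : set 'M[K]_n) : Prop :=
  A 0 /\
  (forall S T, A S -> A T -> A (S + T)) /\
  (forall (c : K) T, A T -> A (c *: T)) /\
  (forall S T, A S -> A T -> A (2%:R^-1 *: (S *m T + T *m S))).

(* Fix y and T := alpha (F y).  Differentiating the identity
   F'(x)(xT) = F(x) beta(T) in x along v gives
   F''(y)(yT, v) + F'(y)(vT) = F'(y)(v) beta(T);
   for v = yT the last term of the left side is F'(y)(y T^2) = F(y) beta(T^2),
   because T^2 = T . T lies in the Jordan algebra. *)
From HB Require Import structures.
From mathcomp Require Import all_boot all_order all_algebra.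
From mathcomp Require Import all_classical all_reals all_analysis.
Import Order.TTheory GRing.Theory Num.Theory.
Import numFieldNormedType.Exports.
Local Open Scope classical_set_scope.
Local Open Scope ring_scope.

Section DiffAlongLinearField.
Context {K : numFieldType} {V W : normedModType K}.

Lemma cvg_diff_quotient (f : V -> W) (a v : V) : differentiable f a ->
  (fun h : K => h^-1 *: (f (h *: v + a) - f a)) @ 0^' --> 'd f a v.
Proof.
by move=> df; rewrite -deriveE //; exact: (diff_derivable df).
Qed.

(* Product rule for [x |-> 'd G x (P x)], derived from the difference quotient
   since that map is only known to be differentiable through [H]. *)
Lemma diff_diff_linear_field (G H : V -> W) (P : {linear V -> V}) (y v : V) :
  (forall x, 'd G x (P x) = H x) -> differentiable H y ->
  differentiable (fun x => 'd G x (P y)) y ->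
  {for y, continuous (fun x => 'd G x (P v))} ->
  'd H y v = 'd (fun x => 'd G x (P y)) y v + 'd G y (P v).
Proof.
move=> GPH dH dGPy cGPv.
have cGPv_line : (fun h : K => 'd G (h *: v + y) (P v)) @ 0^' --> 'd G y (P v).
  have c0 : {for 0, continuous ((fun x => 'd G x (P v)) \o (fun h : K => h *: v + y))}.
    apply: continuous_comp; last by rewrite /= scale0r add0r.
    exact/differentiable_continuous/differentiableD.
  by have := (continuous_withinNx _ 0).1 c0; rewrite /= scale0r add0r.
apply: cvg_unique (cvg_diff_quotient _ _ v dH) _ => /=.
  exact: norm_hausdorff.
apply: cvg_trans (cvgD (cvg_diff_quotient _ _ v dGPy) cGPv_line).
apply: near_eq_cvg; near=> h.
have h0 : h != 0 by near: h; exact: nbhs_dnbhs_neq.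
rewrite /= -!GPH (linearP P) /=.
rewrite ['d G _ (_ + _)]linearD ['d G _ (_ *: _)]linearZ /=.
by rewrite -addrA scalerDr scalerA mulVf // scale1r [X in _ = X]addrC.
Unshelve. all: by end_near.
Qed.

End DiffAlongLinearField.

Lemma mulmxr_continuous {K : numFieldType} {m p : nat} (B : 'M[K]_(m, p)) :
  continuous (mulmxr B : 'rV[K]_m -> 'rV[K]_p).
Proof.
move=> x; apply: differentiable_continuous.
have -> : mulmxr B = \sum_(k < m) (fun x : 'rV[K]_m => x 0 k *: row k B).
  by apply/funext => z; rewrite /= mulmx_sum_row fct_sumE.
by apply: differentiable_sum => k; apply/differentiableZl/differentiable_coord.
Qed.

Section MulmxrComp.
Context {K : numFieldType} {n m p : nat}.
Context {F : 'rV[K]_n -> 'rV[K]_m} (B : 'M[K]_(m, p)) {y : 'rV[K]_n}.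
Hypothesis dF : differentiable F y.

Lemma differentiable_mulmxr_comp : differentiable (fun x => F x *m B) y.
Proof.
exact: differentiable_comp dF (linear_differentiable _ (mulmxr_continuous B)).
Qed.

Lemma diff_mulmxr_comp (v : 'rV[K]_n) :
  'd (fun x => F x *m B) y v = 'd F y v *m B.
Proof.
have dB := @linear_differentiable _ _ _ (mulmxr B) (F y) (mulmxr_continuous B).
by rewrite (diff_comp dF dB) /= diff_lin //; exact: mulmxr_continuous.
Qed.

End MulmxrComp.

Section SecondDerivativeAlongLinearMap.
Context {K : numFieldType} {n m : nat} {F : 'rV[K]_n -> 'rV[K]_m}.
Context {T : 'M[K]_n} {B : 'M[K]_m}.
Hypothesis dF : forall y, differentiable F y.
Hypothesis ddF : forall u y, differentiable (fun x => 'd F x u) y.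
Hypothesis dF_mulmx : forall y, 'd F y (y *m T) = F y *m B.

Lemma d2_mulmxr (y v : 'rV[K]_n) :
  d2 F y (y *m T) v = 'd F y v *m B - 'd F y (v *m T).
Proof.
apply/eqP; rewrite eq_sym subr_eq -(diff_mulmxr_comp B (dF y)); apply/eqP.
exact: (@diff_diff_linear_field _ _ _ F _ (mulmxr T) y v dF_mulmx
  (differentiable_mulmxr_comp B (dF y)) (ddF (y *m T) y)
  (differentiable_continuous (ddF (v *m T) y))).
Qed.

End SecondDerivativeAlongLinearMap.

Lemma jordan_operator_algebra_mulmx_self {K : numFieldType} {n : nat}
    {A : set 'M[K]_n} {T : 'M[K]_n} :
  jordan_operator_algebra A -> A T -> A (T *m T).
Proof.
move=> [_ [_ [_ AJ]]] AT; have := AJ T T AT AT.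
by rewrite -mulr2n -scalerMnr scalerMnl -mulr_natr mulVf ?scale1r // pnatr_eq0.
Qed.

Theorem theorem3p2 (K : numFieldType) (n m : nat)
  (F : 'rV[K]_n -> 'rV[K]_m) (A : set 'M[K]_n)
  (alpha : 'rV[K]_m -> 'M[K]_n) (beta : 'M[K]_n -> 'M[K]_m) :
  C2 F ->
  (forall z, A (alpha z)) ->
  (forall y T, A T -> 'd F y (y *m T) = F y *m beta T) ->
  let f := fun y => y *m alpha (F y) in
  let g := fun z => z *m beta (alpha z) in
  let gamma := fun z =>
    z *m (beta (alpha z) *m beta (alpha z) - beta (alpha z *m alpha z)) in
  (forall y, 'd F y (f y) = g (F y)) /\
  (jordan_operator_algebra A -> forall y, d2 F y (f y) (f y) = gamma (F y)).
Proof.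
move=> [dF [ddF _]] Aalpha dF_mulmx f g gamma.
split=> [y | JA y]; first exact: dF_mulmx.
set T := alpha (F y); have AT : A T := Aalpha _.
have AT2 : A (T *m T) := jordan_operator_algebra_mulmx_self JA AT.
rewrite /f /gamma -/T (d2_mulmxr dF ddF (fun x => dF_mulmx x T AT)).
by rewrite dF_mulmx // -[y *m T *m T]mulmxA dF_mulmx // mulmxBr mulmxA.
Qed.
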